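(* Let $F$ be a field of characteristic $0$, $d\ge1$, $k\le d^2$, and let $f(x_1,\dots,x_k)\in F\langle X\rangle^{\otimes n}$ be a tensor polynomial that is multilinear and antisymmetric in $x_1,\dots,x_k$. Define the tensor polynomial in $d^2$ variables $$\Phi(x_1,\dots,x_{d^2}):=Alt_{x_1,\dots,x_{d^2}}\big(f(x_1,\dots,x_k)\otimes x_{k+1}\otimes x_{k+2}\otimes\cdots\otimes x_{d^2}\big)\in F\langle X\rangle^{\otimes(n+d^2-k)}.$$ Then $f$ is not identically zero when evaluated on $d\times d$ matrices $M_d(F)$ if and only if $\Phi$ is not identically zero when evaluated on $M_d(F)$.
   Context: $F\langle X\rangle$ is the free associative algebra in $x_1,x_2,\dots$; tensor polynomials are evaluated on matrices via the algebra homomorphism induced by $x_i\mapsto A_i\in M_d(F)$. $Alt_{x_1,\dots,x_m}G:=\sum_{\sigma\in S_m}\epsilon_\sigma G(x_{\sigma(1)},\dots,x_{\sigma(m)})$. *)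

(* Tensor polynomials over F<X> = F<x_0, x_1, ...> (0-indexed variables). *)
From HB Require Import structures.
From mathcomp Require Import all_boot all_order all_algebra all_fingroup.
From mathcomp Require Import finmap.
From mathcomp.multinomials Require Import monalg.

Set Implicit Arguments.
Unset Strict Implicit.
Unset Printing Implicit Defensive.

Import GRing.Theory.
Local Open Scope ring_scope.

(* A word (monomial of F<X>): the sequence of variable indices, [:: i1; ...; il]
   stands for x_{i1} x_{i2} ... x_{il}.  Words form a basis of F<X>. *)
Definition word := seq nat.

(* F<X>^{(x) n}: the free F-module on the basis of n-tuples of words
   (tensor products of basis monomials). *)
Definition tpoly (F : nzRingType) (n : nat) := {malg F[n.-tuple word]}.

Definition eval_word (F : nzRingType) (d : nat) (A : nat -> 'M[F]_d) (w : word)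
  : 'M[F]_d := foldr (fun x M => A x *m M) 1%:M w.

(* M_d(F)^{(x) n} is identified with F^{(I_d x I_d)^n}: the pure tensor
   M_1 (x) ... (x) M_n corresponds to  ij |-> prod_t M_t (ij t).1 (ij t).2. *)
Definition eval_tpoly (F : nzRingType) (n d : nat) (A : nat -> 'M[F]_d)
  (p : tpoly F n) : {ffun {ffun 'I_n -> 'I_d * 'I_d} -> F} :=
  [ffun ij : {ffun 'I_n -> 'I_d * 'I_d} => \sum_(m <- msupp p)
       p@_m * \prod_(t < n) eval_word A (tnth m t) (ij t).1 (ij t).2].

(* p is multilinear in x_0..x_{k-1} and involves only these variables:
   every monomial contains each x_i (i < k) exactly once and nothing else. *)
Definition multilinear_in (F : nzRingType) (n k : nat) (p : tpoly F n) : Prop :=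
  forall m : n.-tuple word, m \in msupp p -> perm_eq (flatten m) (iota 0 k).

Definition tp_rename (F : nzRingType) (n : nat) (g : nat -> nat) (p : tpoly F n)
  : tpoly F n :=
  \sum_(m <- msupp p) << p@_m *g map_tuple (map g) m >>.

Definition perm_ext (k : nat) (s : 'S_k) (i : nat) : nat :=
  if (insub i : option 'I_k) is Some j then nat_of_ord (s j) else i.

Definition antisymmetric_in (F : nzRingType) (n k : nat) (p : tpoly F n) : Prop :=
  forall s : 'S_k, tp_rename (perm_ext s) p = (-1) ^+ odd_perm s *: p.

Definition tp_Alt (F : nzRingType) (n N : nat) (p : tpoly F n) : tpoly F n :=
  \sum_(s : 'S_N) (-1) ^+ odd_perm s *: tp_rename (perm_ext s) p.

Definition tp_tensor_vars (F : nzRingType) (n k r : nat) (p : tpoly F n)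
  : tpoly F (n + r) :=
  \sum_(m <- msupp p)
     << p@_m *g cat_tuple m (mktuple (fun j : 'I_r => [:: (k + j)%N])) >>.

Definition Phi (F : nzRingType) (n d k : nat) (f : tpoly F n)
  : tpoly F (n + (d ^ 2 - k)) :=
  tp_Alt (d ^ 2) (tp_tensor_vars k (d ^ 2 - k) f).

Definition nonvanishing_on (F : nzRingType) (n d : nat) (p : tpoly F n) : Prop :=
  exists A : nat -> 'M[F]_d, eval_tpoly A p != 0.

(* Expanding Alt, the value of Phi at A is a signed sum of values of f at
   permuted arguments times matrix entries, so Phi <> 0 forces f <> 0.
   Conversely, by multilinearity a nonzero value of f is already attained at
   matrix units x_i = e_(c i), and by antisymmetry in characteristic 0 the
   c i (i < k) are distinct.  Extend c to a bijection tau from {0, ..., d^2-1}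
   onto the matrix units, substitute x_i = e_(tau i) in Phi and read the
   factor x_(k+j) at the entry tau (k+j): only the permutations fixing
   k, ..., d^2-1 survive, each contributing f(e_tau) by antisymmetry, so Phi
   takes the value k! f(e_tau) <> 0. *)

From HB Require Import structures.
From mathcomp Require Import all_boot all_order all_algebra all_fingroup.
From mathcomp Require Import finmap.
From mathcomp.multinomials Require Import monalg.

Set Implicit Arguments.
Unset Strict Implicit.
Unset Printing Implicit Defensive.

Import GRing.Theory.

Section PermExt.
Local Open Scope group_scope.
Variable k : nat.
Implicit Types s t : 'S_k.

Lemma perm_ext_ord s (i : 'I_k) : perm_ext s i = s i.
Proof. by rewrite /perm_ext valK. Qed.

Lemma perm_ext_lt s x (lt_xk : (x < k)%N) : perm_ext s x = s (Ordinal lt_xk).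
Proof. by rewrite -perm_ext_ord. Qed.

Lemma perm_ext_ge s x : (k <= x)%N -> perm_ext s x = x.
Proof. by move=> le_kx; rewrite /perm_ext insubF // ltnNge le_kx. Qed.

Lemma perm_ext1 : perm_ext (1 : 'S_k) =1 id.
Proof.
move=> x; case: (ltnP x k) => [lt_xk|]; last exact: perm_ext_ge.
by rewrite (perm_ext_lt _ lt_xk) perm1.
Qed.

Lemma perm_extM s t : perm_ext (s * t) =1 perm_ext t \o perm_ext s.
Proof.
move=> x; case: (ltnP x k) => [lt_xk|le_kx]; last by rewrite /= !perm_ext_ge.
by rewrite /= !(perm_ext_lt _ lt_xk) permM perm_ext_ord.
Qed.

Lemma perm_ext_inj s : injective (perm_ext s).
Proof.
have ext_lt x (lt_xk : (x < k)%N) : (perm_ext s x < k)%N.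
  by rewrite (perm_ext_lt _ lt_xk).
move=> x y; case: (ltnP x k) => [lt_xk|le_kx]; case: (ltnP y k) => [lt_yk|le_ky].
- by rewrite (perm_ext_lt _ lt_xk) (perm_ext_lt _ lt_yk) => /val_inj/perm_inj [].
- move=> eq_xy; move: (ext_lt x lt_xk).
  by rewrite eq_xy perm_ext_ge // ltnNge le_ky.
- move=> eq_xy; move: (ext_lt y lt_yk).
  by rewrite -eq_xy perm_ext_ge // ltnNge le_kx.
- by rewrite !perm_ext_ge.
Qed.

End PermExt.

Section WidenPerm.
Local Open Scope group_scope.
Variables (k N : nat) (le_kN : (k <= N)%N).
Implicit Types s t : 'S_k.

Definition widen_perm_fun s (i : 'I_N) : 'I_N :=
  if insub (val i) is Some j then widen_ord le_kN (s j) else i.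

Lemma widen_perm_funE s i : val (widen_perm_fun s i) = perm_ext s i.
Proof. by rewrite /widen_perm_fun /perm_ext; case: insub. Qed.

Lemma widen_perm_fun_inj s : injective (widen_perm_fun s).
Proof.
by move=> i j /(congr1 val); rewrite !widen_perm_funE => /perm_ext_inj /val_inj.
Qed.

Definition widen_perm s : 'S_N := perm (@widen_perm_fun_inj s).

Lemma perm_ext_widen s : perm_ext (widen_perm s) =1 perm_ext s.
Proof.
move=> x; case: (ltnP x N) => [lt_xN|le_Nx].
  by rewrite (perm_ext_lt _ lt_xN) permE widen_perm_funE.
by rewrite !perm_ext_ge // (leq_trans le_kN).
Qed.

Lemma widen_perm_inj : injective widen_perm.
Proof.
move=> s t eq_st; apply/permP => i; apply: ord_inj.
by rewrite -!perm_ext_ord -perm_ext_widen eq_st perm_ext_widen.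
Qed.

Lemma widen_perm1 : widen_perm 1 = 1.
Proof.
apply/permP => i; apply: ord_inj.
by rewrite -!perm_ext_ord perm_ext_widen !perm_ext1.
Qed.

Lemma widen_permM : {morph widen_perm : s t / s * t}.
Proof.
move=> s t; apply/permP => i; apply: ord_inj.
by rewrite permM -!perm_ext_ord !perm_ext_widen perm_extM.
Qed.

Lemma widen_perm_tperm (a b : 'I_k) :
  widen_perm (tperm a b) = tperm (widen_ord le_kN a) (widen_ord le_kN b).
Proof.
apply/permP => i; apply: ord_inj; rewrite -perm_ext_ord perm_ext_widen.
case: (ltnP i k) => [lt_ik|le_ki].
  rewrite (perm_ext_lt _ lt_ik) !permE /=.
  have -> : (i == widen_ord le_kN a) = (Ordinal lt_ik == a) by [].
  have -> : (i == widen_ord le_kN b) = (Ordinal lt_ik == b) by [].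
  by case: eqP => _ //=; case: eqP.
rewrite perm_ext_ge // tpermD //; apply: contraTneq le_ki => <-;
  by rewrite /= -ltnNge ltn_ord.
Qed.

Lemma odd_widen_perm s : odd_perm (widen_perm s) = odd_perm s.
Proof.
have [ts -> dts] := prod_tpermP s.
rewrite (big_morph widen_perm widen_permM widen_perm1).
under eq_bigr do rewrite widen_perm_tperm.
rewrite -(big_map (fun p => (widen_ord le_kN p.1, widen_ord le_kN p.2)) xpredT
   (fun p => tperm p.1 p.2)).
by rewrite !odd_perm_prod ?size_map // all_map; apply: sub_all dts.
Qed.

Lemma perm_on_ltP (g : 'S_N) :
  reflect (forall j : 'I_(N - k), perm_ext g (k + j) = (k + j)%N)
          (perm_on [set i : 'I_N | (i < k)%N] g).
Proof.
apply: (iffP idP) => [on_g j | fix_g].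
  have lt_kj : (k + j < N)%N by rewrite -ltn_subRL.
  by rewrite (perm_ext_lt _ lt_kj) (out_perm on_g) // inE -leqNgt leq_addr.
apply/subsetP => i; rewrite !inE; apply: contraR; rewrite -leqNgt => le_ki.
have lt_ik : (i - k < N - k)%N by rewrite ltn_sub2r // (leq_ltn_trans le_ki).
apply/eqP/ord_inj; rewrite /= -perm_ext_ord.
by have := fix_g (Ordinal lt_ik); rewrite /= subnKC.
Qed.

Lemma perm_on_widen_perm s : perm_on [set i : 'I_N | (i < k)%N] (widen_perm s).
Proof. by apply/perm_on_ltP => j; rewrite perm_ext_widen perm_ext_ge ?leq_addr. Qed.

Lemma widen_perm_onto (g : 'S_N) :
  perm_on [set i : 'I_N | (i < k)%N] g -> exists s, g = widen_perm s.
Proof.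
move=> on_g; have lt_g (i : 'I_k) : (g (widen_ord le_kN i) < k)%N.
  by have := perm_closed (widen_ord le_kN i) on_g; rewrite !inE /= ltn_ord.
pose r (i : 'I_k) := Ordinal (lt_g i).
have r_inj : injective r.
  by move=> i j [] /ord_inj /perm_inj [] /ord_inj.
exists (perm r_inj); apply/permP => i; apply: ord_inj.
rewrite -!perm_ext_ord perm_ext_widen; case: (ltnP i k) => [lt_ik|le_ki].
  rewrite (perm_ext_lt _ lt_ik) permE perm_ext_ord.
  by congr (nat_of_ord (g _)); apply: ord_inj.
by rewrite (perm_ext_ge _ le_ki) perm_ext_ord (out_perm on_g) // inE -leqNgt.
Qed.

Lemma big_perm_on_widen (R : Type) (idx : R) (op : Monoid.com_law idx)
    (h : 'S_N -> R) :
  \big[op/idx]_(g | perm_on [set i : 'I_N | (i < k)%N] g) h g =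
  \big[op/idx]_(s : 'S_k) h (widen_perm s).
Proof.
rewrite -(big_imset h (in2W widen_perm_inj)); apply: eq_bigl => g.
apply/idP/imsetP => [/widen_perm_onto [s ->] | [s _ ->]]; last first.
  exact: perm_on_widen_perm.
by exists s.
Qed.

End WidenPerm.

Local Open Scope ring_scope.

Lemma sumr_neq0_exists (V : nmodType) (I : finType) (G : I -> V) :
  \sum_i G i != 0 -> exists i, G i != 0.
Proof.
move=> nz_sum; apply/existsP; apply: contraNT nz_sum => /existsPn G0.
by rewrite big1 // => i _; apply/eqP/negbNE/G0.
Qed.

Lemma ffun_neq0_exists (V : nmodType) (I : finType) (G : {ffun I -> V}) :
  G != 0 -> exists i, G i != 0.
Proof.
move=> nz_G; apply/existsP; apply: contraNT nz_G => /existsPn G0.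
by apply/eqP/ffunP => i; rewrite ffunE; apply/eqP/negbNE/G0.
Qed.

Lemma prodr_nat_bool (R : comPzSemiRingType) (I : finType) (b : pred I) :
  \prod_i (b i)%:R = [forall i, b i]%:R :> R.
Proof.
have [/forallP b_all | /forallPn [i not_bi]] := boolP [forall i, b i].
  by rewrite big1 // => i _; rewrite b_all.
by rewrite (bigD1 i) //= (negbTE not_bi) mul0r.
Qed.

Definition delta_vars (R : nzRingType) (d : nat) (c : nat -> 'I_d * 'I_d) :
  nat -> 'M[R]_d := fun i => delta_mx (c i).1 (c i).2.

Lemma delta_varsE (R : nzRingType) d (c : nat -> 'I_d * 'I_d) i u :
  delta_vars R c i u.1 u.2 = (c i == u)%:R.
Proof. by rewrite mxE -xpair_eqE -!surjective_pairing eq_sym. Qed.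

Definition cat_ffun (T : Type) n r (ij : {ffun 'I_n -> T}) (e : 'I_r -> T) :
  {ffun 'I_(n + r) -> T} :=
  [ffun t => match split t with inl a => ij a | inr j => e j end].

Lemma cat_ffun_lshift (T : Type) n r (ij : {ffun 'I_n -> T}) (e : 'I_r -> T) :
  [ffun t => cat_ffun ij e (lshift r t)] = ij.
Proof. by apply/ffunP => t; rewrite !ffunE (unsplitK (inl t)). Qed.

Lemma cat_ffun_rshift (T : Type) n r (ij : {ffun 'I_n -> T}) (e : 'I_r -> T) j :
  cat_ffun ij e (rshift n j) = e j.
Proof. by rewrite ffunE (unsplitK (inr j)). Qed.

Lemma extend_injection (T : finType) k (c : nat -> T) (x0 : T) :
    (forall i j, (i < k)%N -> (j < k)%N -> c i = c j -> i = j) ->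
  exists tau : nat -> T, (forall i, (i < k)%N -> tau i = c i) /\
    (forall i j, (i < #|T|)%N -> (j < #|T|)%N -> tau i = tau j -> i = j).
Proof.
move=> c_inj; pose cs := [seq c i | i <- iota 0 k].
pose s := cs ++ [seq x <- enum T | x \notin cs].
have uniq_cs : uniq cs.
  rewrite map_inj_in_uniq ?iota_uniq // => i j.
  by rewrite !mem_iota => /andP[_ lt_ik] /andP[_ lt_jk]; apply: c_inj.
have uniq_s : uniq s.
  rewrite cat_uniq uniq_cs filter_uniq ?enum_uniq // andbT.
  by apply/hasPn => x; rewrite mem_filter => /andP[].
have size_s : size s = #|T|.
  rewrite cardE -(perm_size (uniq_perm uniq_s (enum_uniq _) _)) // => x.
  by rewrite mem_cat mem_filter mem_enum andbT orbN.
exists (nth x0 s); split=> [i lt_ik | i j lt_iT lt_jT /eqP].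
  by rewrite nth_cat size_map size_iota lt_ik (nth_map 0%N) ?size_iota ?nth_iota.
by rewrite nth_uniq ?size_s // => /eqP.
Qed.

Section Evaluation.
Variables (R : comNzRingType) (d : nat).
Implicit Types A : nat -> 'M[R]_d.

Definition eval_tmono n A (ij : {ffun 'I_n -> 'I_d * 'I_d}) (m : n.-tuple word)
  : R :=
  \prod_(t < n) eval_word A (tnth m t) (ij t).1 (ij t).2.

Lemma eval_tpolyE n A (p : tpoly R n) ij :
  eval_tpoly A p ij = mmap idfun (eval_tmono A ij) p.
Proof. by rewrite ffunE. Qed.

Lemma eval_tpolyU n A ij c (m : n.-tuple word) :
  eval_tpoly A (<< c *g m >> : tpoly R n) ij = c * eval_tmono A ij m.
Proof. by rewrite eval_tpolyE mmapU. Qed.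

Lemma eval_tpoly_sum n A ij I (r : seq I) (P : pred I) (G : I -> tpoly R n) :
  eval_tpoly A (\sum_(i <- r | P i) G i) ij =
  \sum_(i <- r | P i) eval_tpoly A (G i) ij.
Proof.
by rewrite eval_tpolyE raddf_sum; apply: eq_bigr => i _; rewrite eval_tpolyE.
Qed.

Lemma eval_tpolyZ n A ij c (p : tpoly R n) :
  eval_tpoly A (c *: p) ij = c * eval_tpoly A p ij.
Proof.
rewrite !eval_tpolyE (mmapEw (msuppZ_le _ _)) mmapE big_distrr /=.
by apply: eq_bigr => m _; rewrite mcoeffZ mulrA.
Qed.

Lemma eval_word_cons A x w : eval_word A (x :: w) = A x *m eval_word A w.
Proof. by []. Qed.

Lemma eq_eval_word A A' w : {in w, A =1 A'} -> eval_word A w = eval_word A' w.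
Proof.
elim: w => [//|x w IHw] eq_AA'; rewrite !eval_word_cons eq_AA' ?mem_head //.
by rewrite IHw // => y w_y; rewrite eq_AA' // inE w_y orbT.
Qed.

Lemma eval_word_map A g w : eval_word A (map g w) = eval_word (A \o g) w.
Proof. by elim: w => [//|x w IHw]; rewrite [map _ _]/= !eval_word_cons IHw. Qed.

Lemma eval_word_set_notin A j X w :
  j \notin w -> eval_word [eta A with j |-> X] w = eval_word A w.
Proof.
move=> w_j; apply: eq_eval_word => x w_x /=.
by case: eqP => // eq_xj; rewrite -eq_xj w_x in w_j.
Qed.

Lemma eval_word_set_linear A j w a X Y : count_mem j w = 1%N ->
  eval_word [eta A with j |-> a *: X + Y] w =
  a *: eval_word [eta A with j |-> X] w + eval_word [eta A with j |-> Y] w.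
Proof.
elim: w => [//|x w IHw]; rewrite !eval_word_cons /=; case: eqP => [<- | _] /=.
  rewrite add1n => -[/count_memPn w_j].
  by rewrite !eval_word_set_notin // mulmxDl scalemxAl.
by rewrite add0n => /IHw ->; rewrite mulmxDr scalemxAr.
Qed.

Lemma eval_tpoly_rename n g A (p : tpoly R n) ij :
  eval_tpoly A (tp_rename g p) ij = eval_tpoly (A \o g) p ij.
Proof.
rewrite /tp_rename eval_tpoly_sum [RHS]eval_tpolyE mmapE; apply: eq_bigr => m _.
rewrite eval_tpolyU; congr (_ * _); apply: eq_bigr => t _.
by rewrite tnth_map eval_word_map.
Qed.

Lemma eval_tpoly_tensor_vars n k r A (p : tpoly R n) ij :
  eval_tpoly A (tp_tensor_vars k r p) ij =
  eval_tpoly A p [ffun t => ij (lshift r t)] *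
  \prod_(j < r) A (k + j)%N (ij (rshift n j)).1 (ij (rshift n j)).2.
Proof.
rewrite /tp_tensor_vars eval_tpoly_sum [eval_tpoly A p _]eval_tpolyE mmapE.
rewrite mulr_suml; apply: eq_bigr => m _; rewrite eval_tpolyU -mulrA.
congr (_ * _); rewrite /eval_tmono big_split_ord; congr (_ * _).
  by apply: eq_bigr => t _; rewrite tnth_lshift ffunE.
by apply: eq_bigr => j _; rewrite tnth_rshift tnth_mktuple /eval_word /= mulmx1.
Qed.

Lemma eval_Phi n k A (f : tpoly R n) ij :
  eval_tpoly A (Phi d k f) ij =
  \sum_(g : 'S_(d ^ 2)) (-1) ^+ odd_perm g *
    (eval_tpoly (A \o perm_ext g) f [ffun t => ij (lshift (d ^ 2 - k) t)] *
     \prod_(j < d ^ 2 - k)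
        A (perm_ext g (k + j)) (ij (rshift n j)).1 (ij (rshift n j)).2).
Proof.
rewrite /Phi /tp_Alt eval_tpoly_sum; apply: eq_bigr => g _.
by rewrite eval_tpolyZ eval_tpoly_rename eval_tpoly_tensor_vars.
Qed.

Lemma nonvanishing_of_Phi n k (f : tpoly R n) :
  nonvanishing_on d (Phi d k f) -> nonvanishing_on d f.
Proof.
case=> A /ffun_neq0_exists [ij]; rewrite eval_Phi => /sumr_neq0_exists [g nz_g].
exists (A \o perm_ext g); apply: contraNneq nz_g => ->.
by rewrite ffunE mul0r mulr0.
Qed.

End Evaluation.

Section Multilinear.
Variables (R : comNzRingType) (d n k : nat) (f : tpoly R n).
Hypothesis f_ml : multilinear_in k f.
Implicit Types (A : nat -> 'M[R]_d) (ij : {ffun 'I_n -> 'I_d * 'I_d}).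

Lemma multilinear_var_lt m t x :
  m \in msupp f -> x \in tnth m t -> (x < k)%N.
Proof.
move=> f_m m_x; have := mem_iota 0 k x; rewrite -(perm_mem (f_ml f_m)) /= => <-.
by apply/flattenP; exists (tnth m t) => //; apply: mem_tnth.
Qed.

Lemma eq_eval_multilinear A A' :
  (forall i, (i < k)%N -> A i = A' i) -> eval_tpoly A f = eval_tpoly A' f.
Proof.
move=> eq_AA'; apply/ffunP => ij; rewrite !eval_tpolyE !mmapE.
apply: eq_big_seq => m f_m; congr (_ * _); apply: eq_bigr => t _.
rewrite (@eq_eval_word _ _ A A') // => x m_x.
by rewrite eq_AA' // (multilinear_var_lt f_m m_x).
Qed.

Lemma multilinear_occurs_once m j : m \in msupp f -> (j < k)%N ->
  exists2 t0, count_mem j (tnth m t0) = 1%N &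
              forall t, t != t0 -> j \notin tnth m t.
Proof.
move=> f_m lt_jk.
have sum_count : (\sum_(t < n) count_mem j (tnth m t) = 1)%N.
  have /seq.permP /(_ (pred1 j)) := f_ml f_m.
  rewrite count_flatten sumnE big_map big_tuple => ->.
  by rewrite count_uniq_mem ?iota_uniq // mem_iota lt_jk.
have [t0 nz_t0] : exists t0, count_mem j (tnth m t0) != 0%N.
  by apply/existsP; apply: contraT; rewrite negb_exists => /forallP zero;
     move: sum_count; rewrite big1 // => t _; apply/eqP/negbNE/zero.
have [once_t0 /eqP] : count_mem j (tnth m t0) = 1%N /\
    (\sum_(t < n | t != t0) count_mem j (tnth m t) = 0)%N.
  move: nz_t0 sum_count; rewrite (bigD1 t0) //=.
  by case: (count_mem _ _) => [|[|c]] //= _ [].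
rewrite sum_nat_eq0 => /forallP zero_rest; exists t0 => // t ne_t.
by apply/count_memPn/eqP; have := zero_rest t; rewrite ne_t.
Qed.

Lemma eval_multilinear A j ij a X Y : (j < k)%N ->
  eval_tpoly [eta A with j |-> a *: X + Y] f ij =
  a * eval_tpoly [eta A with j |-> X] f ij + eval_tpoly [eta A with j |-> Y] f ij.
Proof.
move=> lt_jk; rewrite !eval_tpolyE !mmapE mulr_sumr -big_split /=.
apply: eq_big_seq => m f_m.
have [t0 once_t0 notin_j] := multilinear_occurs_once f_m lt_jk.
have split_t0 B : eval_tmono B ij m =
    eval_word B (tnth m t0) (ij t0).1 (ij t0).2 *
    \prod_(t < n | t != t0) eval_word B (tnth m t) (ij t).1 (ij t).2.
  by rewrite /eval_tmono (bigD1 t0).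
have rest Z :
    \prod_(t < n | t != t0) eval_word [eta A with j |-> Z] (tnth m t) (ij t).1 (ij t).2
    = \prod_(t < n | t != t0) eval_word A (tnth m t) (ij t).1 (ij t).2.
  by apply: eq_bigr => t ne_t; rewrite eval_word_set_notin // notin_j.
rewrite !split_t0 eval_word_set_linear // !mxE.
by rewrite !rest mulrDl mulrDr !mulrA [f@_m * a]mulrC.
Qed.

Lemma eval_multilinear_delta A j ij X : (j < k)%N ->
  eval_tpoly [eta A with j |-> X] f ij =
  \sum_(u : 'I_d * 'I_d)
     X u.1 u.2 * eval_tpoly [eta A with j |-> delta_mx u.1 u.2] f ij.
Proof.
move=> lt_jk; rewrite {1}(matrix_sum_delta X) pair_big /=; symmetry.
pose eval_at Z := eval_tpoly [eta A with j |-> Z] f ij.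
apply: (big_rec2 (fun y Z => y = eval_at Z)) => [|u y Z _ ->].
  have := eval_multilinear A ij (-1) 0 0 lt_jk.
  by rewrite scaler0 add0r mulN1r addNr.
by rewrite /eval_at eval_multilinear.
Qed.

Lemma multilinear_delta_witness A ij : (0 < d)%N ->
  eval_tpoly A f ij != 0 -> exists c, eval_tpoly (delta_vars R c) f ij != 0.
Proof.
move=> d_gt0 nz_A.
suff [c [A' [eq_A' nz_A']]] : exists c A',
    (forall i, (i < k)%N -> A' i = delta_vars R c i) /\ eval_tpoly A' f ij != 0.
  by exists c; rewrite -(eq_eval_multilinear eq_A').
have: (k <= k)%N by [].
elim: {-2}k => [_|j IHj lt_jk].
  by exists (fun=> (Ordinal d_gt0, Ordinal d_gt0)), A.
have [c [A' [eq_A' nz_A']]] := IHj (ltnW lt_jk).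
have [u nz_u] : exists u, eval_tpoly [eta A' with j |-> delta_mx u.1 u.2] f ij != 0.
  move: nz_A'; have -> : eval_tpoly A' f = eval_tpoly [eta A' with j |-> A' j] f.
    by apply: eq_eval_multilinear => i _ /=; case: eqP => // ->.
  rewrite eval_multilinear_delta // => /sumr_neq0_exists [u nz_u].
  by exists u; apply: contraNneq nz_u => ->; rewrite mulr0.
exists [eta c with j |-> u], [eta A' with j |-> delta_mx u.1 u.2]; split=> // i.
rewrite ltnS leq_eqVlt /delta_vars /=; case: eqP => [-> //| _ /= lt_ij].
exact: eq_A'.
Qed.

End Multilinear.

Section Antisymmetric.
Variables (R : comNzRingType) (d n k : nat) (f : tpoly R n).
Hypotheses (f_ml : multilinear_in k f) (f_as : antisymmetric_in k f).
Implicit Types (A : nat -> 'M[R]_d) (ij : {ffun 'I_n -> 'I_d * 'I_d}).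

Lemma eval_antisymmetric A (s : 'S_k) ij :
  eval_tpoly (A \o perm_ext s) f ij = (-1) ^+ odd_perm s * eval_tpoly A f ij.
Proof. by rewrite -eval_tpoly_rename f_as eval_tpolyZ. Qed.

Lemma eval_Phi_delta_vars (tau : nat -> 'I_d * 'I_d) ij :
    (k <= d ^ 2)%N ->
    (forall i j, (i < d ^ 2)%N -> (j < d ^ 2)%N -> tau i = tau j -> i = j) ->
  eval_tpoly (delta_vars R tau) (Phi d k f)
    (cat_ffun ij (fun j : 'I_(d ^ 2 - k) => tau (k + j)%N)) =
  k`!%:R * eval_tpoly (delta_vars R tau) f ij.
Proof.
move=> le_kN tau_inj; set B := delta_vars R tau.
rewrite eval_Phi cat_ffun_lshift.
under eq_bigr => g _.
  have -> : \prod_(j < d ^ 2 - k) B (perm_ext g (k + j))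
              (cat_ffun ij (fun j => tau (k + j)%N) (rshift n j)).1
              (cat_ffun ij (fun j => tau (k + j)%N) (rshift n j)).2 =
            (perm_on [set i : 'I_(d ^ 2) | (i < k)%N] g)%:R.
    under eq_bigr do rewrite cat_ffun_rshift delta_varsE.
    rewrite prodr_nat_bool; congr ((nat_of_bool _)%:R).
    apply/forallP/perm_on_ltP => fix_g j; last by rewrite fix_g.
    have lt_kj : (k + j < d ^ 2)%N by rewrite -ltn_subRL.
    by apply: tau_inj (eqP (fix_g j)); rewrite // (perm_ext_lt _ lt_kj).
  over.
transitivity (\sum_(g | perm_on [set i : 'I_(d ^ 2) | (i < k)%N] g)
    (-1) ^+ odd_perm g * eval_tpoly (B \o perm_ext g) f ij).
  rewrite [RHS]big_mkcond; apply: eq_bigr => g _.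
  by case: perm_on; rewrite ?mulr1 ?mulr0.
rewrite big_perm_on_widen //.
rewrite (eq_bigr (fun=> eval_tpoly B f ij)) => [|s _].
  by rewrite sumr_const card_Sn mulr_natl.
rewrite (eq_eval_multilinear f_ml (A' := B \o perm_ext s)) => [|i _]; last first.
  by rewrite /= perm_ext_widen.
by rewrite eval_antisymmetric odd_widen_perm mulrA -signr_addb addbb mul1r.
Qed.

End Antisymmetric.

Lemma eval_alternating (R : idomainType) d n k (f : tpoly R n)
    (A : nat -> 'M[R]_d) (i1 i2 : 'I_k) :
    [pchar R] =i pred0 -> multilinear_in k f -> antisymmetric_in k f ->
  i1 != i2 -> A i1 = A i2 -> eval_tpoly A f = 0.
Proof.
move=> char0 f_ml f_as ne_i12 eq_A12.
have swap_id : eval_tpoly (A \o perm_ext (tperm i1 i2)) f = eval_tpoly A f.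
  apply: (eq_eval_multilinear f_ml) => i lt_ik /=.
  rewrite (perm_ext_lt _ lt_ik) -[in RHS]/(nat_of_ord (Ordinal lt_ik)).
  by case: tpermP => [-> | -> | //]; rewrite eq_A12.
apply/ffunP => ij; rewrite [in RHS]ffunE; apply/eqP.
have := eval_antisymmetric f_as A (tperm i1 i2) ij.
rewrite swap_id odd_tperm ne_i12 expr1 mulN1r => /eqP; rewrite -subr_eq0 opprK.
by rewrite -mulr2n -mulr_natr mulf_eq0 ((pcharf0P _).1 char0) orbF.
Qed.

Lemma nonvanishing_Phi (R : idomainType) n d k (f : tpoly R n) :
    [pchar R] =i pred0 -> (0 < d)%N -> (k <= d ^ 2)%N ->
    multilinear_in k f -> antisymmetric_in k f ->
  nonvanishing_on d f -> nonvanishing_on d (Phi d k f).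
Proof.
move=> char0 d_gt0 le_kN f_ml f_as [A /ffun_neq0_exists [ij nz_A]].
have [c nz_c] := multilinear_delta_witness f_ml d_gt0 nz_A.
have c_inj i j : (i < k)%N -> (j < k)%N -> c i = c j -> i = j.
  move=> lt_ik lt_jk eq_c; apply/eqP; apply: contraTT nz_c => ne_ij.
  rewrite (eval_alternating (i1 := Ordinal lt_ik) (i2 := Ordinal lt_jk)) //.
    by rewrite ffunE eqxx.
  exact: (congr1 (fun u => delta_mx u.1 u.2) eq_c).
have [tau [tau_c tau_inj]] := extend_injection (c 0%N) c_inj.
rewrite card_prod !card_ord mulnn in tau_inj.
exists (delta_vars R tau); apply/eqP.
move=> /ffunP /(_ (cat_ffun ij (fun j => tau (k + j)%N))).
rewrite [in RHS]ffunE; apply/eqP.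
rewrite eval_Phi_delta_vars // (eq_eval_multilinear f_ml (A' := delta_vars R c)).
  rewrite mulf_neq0 //.
  by rewrite ((pcharf0P _).1 char0) -lt0n fact_gt0.
by move=> i lt_ik; rewrite /delta_vars tau_c.
Qed.

Theorem mainTheorem8 (F : fieldType) (n d k : nat) (f : tpoly F n) :
  [pchar F] =i pred0 -> (0 < d)%N -> (k <= d ^ 2)%N ->
  multilinear_in k f -> antisymmetric_in k f ->
  (nonvanishing_on d f <-> nonvanishing_on d (Phi d k f)).
Proof.
move=> char0 d_gt0 le_kd f_ml f_as; split; first exact: nonvanishing_Phi.
exact: nonvanishing_of_Phi.
Qed.
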